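(* Let $\xi\in(0,1)$, let $\lambda(x)=\sum_{i\ge2}\lambda_ix^{i-1}$ and $\rho(x)=\sum_{j\ge2}\rho_jx^{j-1}$ be degree distributions, let $a$ be the average right degree ($1/a=\int_0^1\rho(x)dx$), and suppose the maximal degree of $\lambda$ is at most $k_va$ and the maximal degree of $\rho$ is at most $k_ca$, for constants $k_v,k_c$. Then for every $x\in(0,\xi]$, $$\left|\frac{d^2}{dx^2}\bigl[\lambda(1-\rho(1-x))\bigr]\right|\le\frac{k_v^2k_c^2\rho(1-x)^2a^4}{(1-\xi)^2}+\frac{k_vk_c^2\rho(1-x)a^3}{(1-\xi)^2}.$$
   Context: A degree distribution is a polynomial $\gamma(x)=\sum_{k\ge2}\gamma_kx^{k-1}$ with $\gamma_k\ge0$ and $\sum_k\gamma_k=1$; its maximal degree is the largest $k$ with $\gamma_k\ne0$. *)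

From mathcomp Require Import all_boot all_order all_algebra.
Set Implicit Arguments. Unset Strict Implicit. Unset Printing Implicit Defensive.
Import Order.TTheory GRing.Theory Num.Theory.
Local Open Scope ring_scope.

(* gamma(x) = \sum_{k>=2} gamma_k x^(k-1): the coefficient of x^i in the
   polynomial p is gamma_{i+1}.  No constant term (k >= 2), nonnegative
   coefficients, coefficients summing to 1 (i.e. p.[1] = 1). *)
Definition degree_distribution (R : realFieldType) (p : {poly R}) : Prop :=
  p`_0 = 0 /\ (forall i, 0 <= p`_i) /\ p.[1] = 1.

(* maximal degree = largest k with gamma_k <> 0 = (degree of p) + 1 = size p *)
Definition max_degree (R : realFieldType) (p : {poly R}) : nat := size p.

Definition poly_integral01 (R : realFieldType) (p : {poly R}) : R :=
  \sum_(i < size p) p`_i / (i.+1)%:R.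

From mathcomp Require Import all_boot all_order all_algebra.
From mathcomp Require Import ring lra.
Set Implicit Arguments. Unset Strict Implicit. Unset Printing Implicit Defensive.
Import Order.TTheory GRing.Theory Num.Theory.
Local Open Scope ring_scope.

(* For a polynomial p with nonnegative coefficients, x p'(x) <= size p * p(x)
   termwise, hence x^n p^(n)(x) <= (size p)^n p(x) for x >= 0.  At y = 1 - x
   >= 1 - xi this bounds rho'(y), rho''(y) by (kc a)^n rho(y) / (1 - xi)^n; at
   the point 1, where lam(1) = 1 and which dominates 1 - rho(y) by
   monotonicity, it bounds lam', lam'' by (kv a)^n.  The chain rule
   f'' = lam''(u) rho'(y)^2 - lam'(u) rho''(y) and the triangle inequality
   conclude. *)

Section NonnegCoefficients.
Variable R : realFieldType.
Implicit Types (p : {poly R}) (c k x y : R).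

Lemma polyOver_nnegP p : reflect (forall i, 0 <= p`_i) (p \is a polyOver Num.nneg).
Proof. by apply: (iffP polyOverP) => p0 i; [rewrite -nnegrE | rewrite nnegrE]. Qed.

Lemma horner_nneg_ge0 p x : p \is a polyOver Num.nneg -> 0 <= x -> 0 <= p.[x].
Proof. by move=> p0 x0; rewrite -nnegrE rpred_horner ?nnegrE. Qed.

Lemma ler_horner_nneg p x y : p \is a polyOver Num.nneg ->
  0 <= x -> x <= y -> p.[x] <= p.[y].
Proof.
move=> /polyOver_nnegP p0 x0 xy; rewrite !horner_coef; apply: ler_sum => i _.
by rewrite ler_wpM2l // lerXn2r // nnegrE (le_trans x0).
Qed.

Lemma size_deriv_le p : (size p^`() <= size p)%N.
Proof. by have [->|/lt_size_deriv/ltnW //] := eqVneq p 0; rewrite deriv0. Qed.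

Lemma size_derivn_le p n : (size p^`(n) <= size p)%N.
Proof. by elim: n => // n IHn; rewrite derivnS (leq_trans (size_deriv_le _)). Qed.

Lemma mul_deriv_horner_le p x : p \is a polyOver Num.nneg -> 0 <= x ->
  x * p^`().[x] <= (size p)%:R * p.[x].
Proof.
move=> /polyOver_nnegP p0 x0.
rewrite (horner_coef_wide _ (size_deriv_le p)) (horner_coef_wide _ (leqnSn (size p))).
rewrite big_ord_recl mulr_sumr mulrDr mulr_sumr -[leLHS]add0r.
apply: lerD; first by rewrite !mulr_ge0 ?ler0n.
apply: ler_sum => i _; rewrite coef_deriv /= exprS.
have -> : x * (p`_i.+1 *+ i.+1 * x ^+ i) = i.+1%:R * (p`_i.+1 * (x * x ^+ i)).
  by rewrite -mulr_natr; ring.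
by rewrite ler_wpM2r ?mulr_ge0 ?exprn_ge0 // ler_nat.
Qed.

Lemma mul_derivn_horner_le p n x : p \is a polyOver Num.nneg -> 0 <= x ->
  x ^+ n * p^`(n).[x] <= (size p)%:R ^+ n * p.[x].
Proof.
move=> p0 x0; elim: n => [|n IHn]; first by rewrite !expr0 !mul1r.
have pn0 := polyOver_derivn p0 n.
rewrite derivnS exprSr -mulrA.
apply: le_trans (ler_wpM2l (exprn_ge0 n x0) (mul_deriv_horner_le pn0 x0)) _.
rewrite mulrCA exprS -mulrA ler_pM ?ler0n ?ler_nat ?size_derivn_le //.
by rewrite mulr_ge0 ?exprn_ge0 ?horner_nneg_ge0.
Qed.

Lemma derivn_horner_le p n k c x : p \is a polyOver Num.nneg ->
  (size p)%:R <= k -> 0 < c -> c <= x -> p^`(n).[x] <= k ^+ n * p.[x] / c ^+ n.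
Proof.
move=> p0 pk c0 cx; have x0 : 0 <= x by rewrite (le_trans (ltW c0)).
have pnx0 : 0 <= p^`(n).[x] := horner_nneg_ge0 (polyOver_derivn p0 n) x0.
rewrite ler_pdivlMr ?exprn_gt0 // mulrC.
apply: le_trans (_ : x ^+ n * p^`(n).[x] <= _).
  by rewrite ler_wpM2r // lerXn2r // nnegrE ltW.
apply: le_trans (mul_derivn_horner_le n p0 x0) _.
by rewrite ler_wpM2r ?horner_nneg_ge0 // lerXn2r // nnegrE ?ler0n // (le_trans _ pk).
Qed.
End NonnegCoefficients.

Section ChainRule.
Variable R : comNzRingType.
Implicit Types p q : {poly R}.

Lemma derivn2_comp p q :
  (p \Po q)^`(2) = (p^`(2) \Po q) * q^`() ^+ 2 + (p^`() \Po q) * q^`(2).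
Proof. by rewrite !derivnS !derivn0 !deriv_comp derivM deriv_comp; ring. Qed.

Lemma deriv_comp_1subX p : (p \Po (1 - 'X))^`() = - (p^`() \Po (1 - 'X)).
Proof. by rewrite deriv_comp derivB derivC derivX sub0r mulrN1. Qed.

Lemma horner_derivn2_comp_dual p q x :
  ((p \Po (1 - (q \Po (1 - 'X))))^`(2)).[x]
    = p^`(2).[1 - q.[1 - x]] * q^`().[1 - x] ^+ 2
      - p^`().[1 - q.[1 - x]] * q^`(2).[1 - x].
Proof.
have dq : (1 - (q \Po (1 - 'X)))^`() = q^`() \Po (1 - 'X).
  by rewrite derivB derivC deriv_comp_1subX sub0r opprK.
have d2q : (1 - (q \Po (1 - 'X)))^`(2) = - (q^`(2) \Po (1 - 'X)).
  by rewrite derivnS derivn1 dq deriv_comp_1subX.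
by rewrite derivn2_comp dq d2q !(hornerE, horner_comp) mulrN.
Qed.
End ChainRule.

Theorem lemma3 (R : realFieldType) (xi : R) (lam rho : {poly R}) (a kv kc : R) :
  0 < xi -> xi < 1 ->
  degree_distribution lam -> degree_distribution rho ->
  1 / a = poly_integral01 rho ->
  (max_degree lam)%:R <= kv * a ->
  (max_degree rho)%:R <= kc * a ->
  forall x : R, 0 < x -> x <= xi ->
  `| ((lam \Po (1 - (rho \Po (1 - 'X)))) ^`(2)).[x] |
    <= kv ^+ 2 * kc ^+ 2 * rho.[1 - x] ^+ 2 * a ^+ 4 / (1 - xi) ^+ 2
       + kv * kc ^+ 2 * rho.[1 - x] * a ^+ 3 / (1 - xi) ^+ 2.
Proof.
move=> xi0 xi1 [_ [/polyOver_nnegP lam0 lam1]] [_ [/polyOver_nnegP rho0 rho1]] _.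
rewrite /max_degree => lamS rhoS x x0 xxi.
rewrite horner_derivn2_comp_dual.
set y := 1 - x; set P := rho.[y]; set u := 1 - P.
have xi'0 : 0 < 1 - xi by lra.
have y_ge : 1 - xi <= y by rewrite /y; lra.
have [y0 y1] : 0 <= y /\ y <= 1 by rewrite /y; split; lra.
have P0 : 0 <= P by rewrite horner_nneg_ge0.
have P1 : P <= 1 by rewrite -[leRHS]rho1 ler_horner_nneg.
have [u0 u1] : 0 <= u /\ u <= 1 by rewrite /u; split; lra.
have lam_ge0 n : 0 <= lam^`(n).[u] by rewrite horner_nneg_ge0 ?polyOver_derivn.
have rho_ge0 n : 0 <= rho^`(n).[y] by rewrite horner_nneg_ge0 ?polyOver_derivn.
have lam_le n : lam^`(n).[u] <= (kv * a) ^+ n.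
  apply: le_trans (ler_horner_nneg (polyOver_derivn lam0 n) u0 u1) _.
  by have := derivn_horner_le n lam0 lamS ltr01 (lexx 1); rewrite lam1 expr1n mulr1 divr1.
have rho_le n : rho^`(n).[y] <= (kc * a) ^+ n * P / (1 - xi) ^+ n.
  exact: derivn_horner_le.
apply: le_trans (ler_normB _ _) _.
rewrite -[rho^`()]derivn1 -[lam^`()]derivn1 !normrM !ger0_norm ?exprn_ge0 //.
have -> : kv ^+ 2 * kc ^+ 2 * P ^+ 2 * a ^+ 4 / (1 - xi) ^+ 2
          + kv * kc ^+ 2 * P * a ^+ 3 / (1 - xi) ^+ 2
        = (kv * a) ^+ 2 * ((kc * a) ^+ 1 * P / (1 - xi) ^+ 1) ^+ 2
          + (kv * a) ^+ 1 * ((kc * a) ^+ 2 * P / (1 - xi) ^+ 2).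
  by field; rewrite gt_eqF.
by rewrite lerD ?ler_pM ?lerXn2r ?nnegrE ?exprn_ge0 ?mulr_ge0.
Qed.
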